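(* Let $A_1$ and $A_2$ be algebras of the same dimension $n$ and let $K:A_1\to A_2$ be an algebra isomorphism, identified with its (nonsingular) $n\times n$ matrix in the standard bases. Then $$\mathfrak{u}_{A_1}=K^T\mathfrak{u}_{A_2}K:=\{K^TLK:\ L\in\mathfrak{u}_{A_2}\}.$$
   Context: Throughout, an ''algebra'' is a real finite-dimensional unital associative algebra whose underlying vector space is $\mathbb{R}^n$ ($n\ge1$), with the standard basis and standard topology; elements are written as column vectors $s=(x_1,\dots,x_n)^T$, and $\mathbf{d}s=(dx_1,\dots,dx_n)^T$. The multiplicative identity is $\mathbf{1}_A$. An uncurling metric of $A$ is a real symmetric $n\times n$ matrix $L$ such that the differential 1-form $(s^{-1})^TL\,\mathbf{d}s=\sum_i (Ls^{-1})_i\,dx_i$ is closed, i.e. $d\big((s^{-1})^TL\,\mathbf{d}s\big)=0$, on an open ball centered at $\mathbf{1}_A$ consisting only of units (here $s^{-1}$ is the multiplicative inverse of $s$ in $A$). The anti-rotor $\mathfrak{u}_A$ is the real vector space of all uncurling metrics of $A$. *)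

From HB Require Import structures.
From mathcomp Require Import all_boot all_order all_algebra.
From mathcomp Require Import boolp classical_sets reals topology normedtype derive.
Set Implicit Arguments. Unset Strict Implicit. Unset Printing Implicit Defensive.
Import Order.TTheory GRing.Theory Num.Theory numFieldNormedType.Exports.
Local Open Scope ring_scope.

Record algebra (R : realType) (n : nat) := Algebra {
  amul : 'cV[R]_n -> 'cV[R]_n -> 'cV[R]_n;
  aone : 'cV[R]_n;
  amul_linl : forall (a : R) (x y z : 'cV[R]_n),
      amul (a *: x + y) z = a *: amul x z + amul y z;
  amul_linr : forall (a : R) (x y z : 'cV[R]_n),
      amul z (a *: x + y) = a *: amul z x + amul z y;
  amulA : forall x y z, amul x (amul y z) = amul (amul x y) z;
  amul1l : forall x, amul aone x = x;
  amul1r : forall x, amul x aone = x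
}.

Section Defs.
Variables (R : realType) (n : nat).

Definition is_unit (A : algebra R n) (s : 'cV[R]_n) : Prop :=
  exists t, amul A s t = aone A /\ amul A t s = aone A.

(* multiplicative inverse (0 on non-units; only used on units) *)
Definition ainv (A : algebra R n) (s : 'cV[R]_n) : 'cV[R]_n :=
  match pselect (exists t, amul A s t = aone A /\ amul A t s = aone A) with
  | left h => projT1 (cid h)
  | right _ => 0
  end.

Definition eball (c : 'cV[R]_n) (r : R) : set 'cV[R]_n :=
  [set s | \sum_(i < n) (s i 0 - c i 0) ^+ 2 < r ^+ 2].

Definition pderiv (f : 'cV[R]_n -> R) (j : 'I_n) (s : 'cV[R]_n) : R :=
  derive1 (fun t : R => f (s + t *: delta_mx j 0)) 0.

Definition pderivable (f : 'cV[R]_n -> R) (j : 'I_n) (s : 'cV[R]_n) : Prop :=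
  derivable (fun t : R => f (s + t *: delta_mx j 0)) 0 1.

(* the 1-form sum_i w_i dx_i is closed on B: d w = 0, i.e. the
   partial derivatives exist and d_j w_i = d_i w_j on B *)
Definition closed_form_on (w : 'I_n -> 'cV[R]_n -> R) (B : set 'cV[R]_n) : Prop :=
  forall s, B s -> forall i j : 'I_n,
    pderivable (w i) j s /\ pderivable (w j) i s /\
    pderiv (w i) j s = pderiv (w j) i s.

(* uncurling metric: symmetric L with (s^{-1})^T L ds closed on an open
   ball centered at 1_A consisting only of units *)
Definition uncurling_metric (A : algebra R n) (L : 'M[R]_n) : Prop :=
  L^T = L /\
  exists r : R, 0 < r /\
    (forall s, eball (aone A) r s -> is_unit A s) /\
    closed_form_on (fun i s => (L *m ainv A s) i 0) (eball (aone A) r).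

Definition alg_iso (A1 A2 : algebra R n) (K : 'M[R]_n) : Prop :=
  K \in unitmx /\
  (forall x y, K *m amul A1 x y = amul A2 (K *m x) (K *m y)) /\
  K *m aone A1 = aone A2.

End Defs.

From HB Require Import structures.
From mathcomp Require Import all_boot all_order all_algebra.
From mathcomp Require Import boolp classical_sets reals topology normedtype derive.
From mathcomp Require Import lra ring.
Set Implicit Arguments. Unset Strict Implicit. Unset Printing Implicit Defensive.
Import Order.TTheory GRing.Theory Num.Theory numFieldNormedType.Exports.
Local Open Scope classical_set_scope.
Local Open Scope ring_scope.

(* An algebra isomorphism K maps inverses to inverses: (K s)^-1 = K s^-1.  The
   derivative of s |-> L s^-1 in the direction v is -L s^-1 v s^-1, so the form
   (s^-1)^T L ds is closed near 1 exactly when the matrix of x |-> L s^-1 x s^-1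
   is symmetric there.  For K^T L K at s this matrix is K^T M K, where M is the
   matrix for L at K s; and K maps a small ball around 1 into a given ball around
   1.  Hence K^T u_A2 K is contained in u_A1, and the reverse inclusion is the
   same statement for K^-1. *)

Section LinearMatrix.
Variables (R : realType) (n : nat).

Definition cV_lin_mx (f : 'cV[R]_n -> 'cV[R]_n) : 'M[R]_n :=
  \matrix_(i, j) f (delta_mx j 0) i 0.

Lemma cV_lin_mxE (f : 'cV[R]_n -> 'cV[R]_n) : linear f ->
  forall x, cV_lin_mx f *m x = f x.
Proof.
move=> lin_f x.
pose F : {linear 'cV[R]_n -> 'cV[R]_n} :=
  HB.pack f (GRing.isLinear.Build _ _ _ _ f lin_f).
change (cV_lin_mx f *m x = F x).
rewrite [in RHS](matrix_sum_delta x) linear_sum; apply/matrixP => i k.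
rewrite (ord1 k) !mxE summxE; apply: eq_bigr => j _.
by rewrite big_ord1 linearZ !mxE mulrC.
Qed.

Lemma mulmx_cV_inj (M M' : 'M[R]_n) :
  (forall x : 'cV[R]_n, M *m x = M' *m x) -> M = M'.
Proof.
move=> eqM; apply/matrixP => i j.
have /(congr1 (fun x : 'cV[R]_n => x i 0)) := eqM (delta_mx j 0).
by rewrite -!colE !mxE.
Qed.

End LinearMatrix.

Section AlgebraInverse.
Variables (R : realType) (n : nat) (A : algebra R n).

Definition rmul_mx (y : 'cV[R]_n) : 'M[R]_n := cV_lin_mx (amul A ^~ y).
Definition lmul_mx (x : 'cV[R]_n) : 'M[R]_n := cV_lin_mx (amul A x).

Lemma rmul_mxE y x : rmul_mx y *m x = amul A x y.
Proof. by apply: cV_lin_mxE => a u v; exact: amul_linl. Qed.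

Lemma lmul_mxE x y : lmul_mx x *m y = amul A x y.
Proof. by apply: cV_lin_mxE => a u v; exact: amul_linr. Qed.

Lemma ainvP s : is_unit A s ->
  amul A s (ainv A s) = aone A /\ amul A (ainv A s) s = aone A.
Proof. by rewrite /ainv; case: pselect => // h _; exact: (projT2 (cid h)). Qed.

Lemma ainv_eq s t : amul A s t = aone A -> amul A t s = aone A -> ainv A s = t.
Proof.
move=> st ts; have [_ us] := ainvP (ex_intro _ t (conj st ts)).
by rewrite -[LHS](amul1r A) -st amulA us amul1l.
Qed.

(* Right-multiply [g (s + t v) = 1], where [g = (s + t v)^-1], by [s^-1]. *)
Lemma ainv_line s v t : is_unit A s -> is_unit A (s + t *: v) ->
  ainv A (s + t *: v) =
  ainv A s - t *: (rmul_mx (ainv A s) *m rmul_mx v *m ainv A (s + t *: v)).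
Proof.
move=> /ainvP[su _] /ainvP[_ gs]; set u := ainv A s; set g := ainv A _ in gs *.
rewrite -mulmxA !rmul_mxE.
have {1}-> : u = amul A (amul A g s) u + t *: amul A (amul A g v) u.
  by rewrite addrC -amul_linl -amul_linr [t *: v + s]addrC gs amul1l.
by rewrite addrK -amulA su amul1r.
Qed.

End AlgebraInverse.

Section L1Norm.
Variables (R : realType) (n : nat).
Implicit Types (x y : 'cV[R]_n) (M : 'M[R]_n).

Definition cvnorm1 x : R := \sum_i `|x i 0|.
Definition mxnorm1 M : R := \sum_i \sum_j `|M i j|.

Lemma cvnorm1_ge0 x : 0 <= cvnorm1 x.
Proof. exact: sumr_ge0. Qed.

Lemma mxnorm1_ge0 M : 0 <= mxnorm1 M.
Proof. by apply: sumr_ge0 => i _; exact: sumr_ge0. Qed.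

Lemma cvnorm1D x y : cvnorm1 (x + y) <= cvnorm1 x + cvnorm1 y.
Proof. by rewrite -big_split; apply: ler_sum => i _; rewrite mxE ler_normD. Qed.

Lemma cvnorm1Z a x : cvnorm1 (a *: x) = `|a| * cvnorm1 x.
Proof. by rewrite mulr_sumr; apply: eq_bigr => i _; rewrite mxE normrM. Qed.

Lemma cvnorm1N x : cvnorm1 (- x) = cvnorm1 x.
Proof. by apply: eq_bigr => i _; rewrite mxE normrN. Qed.

Lemma mxnorm1_row M i : \sum_j `|M i j| <= mxnorm1 M.
Proof.
rewrite /mxnorm1 [leRHS](bigD1 i) //= lerDl.
by apply: sumr_ge0 => k _; exact: sumr_ge0.
Qed.

Lemma mxnorm1_entry M i j : `|M i j| <= mxnorm1 M.
Proof. by apply: le_trans (mxnorm1_row M i); rewrite (bigD1 j) //= lerDl sumr_ge0. Qed.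

Lemma mulmx_entry_le M x i : `|(M *m x) i 0| <= mxnorm1 M * cvnorm1 x.
Proof.
rewrite mxE mulr_sumr; apply: le_trans (ler_norm_sum _ _ _) _.
by apply: ler_sum => j _; rewrite normrM ler_wpM2r ?mxnorm1_entry.
Qed.

Lemma cvnorm1_mulmx_le M x : cvnorm1 (M *m x) <= n%:R * mxnorm1 M * cvnorm1 x.
Proof.
rewrite -mulrA mulr_natl -[n in _ *+ n]card_ord -sumr_const.
by apply: ler_sum => i _; exact: mulmx_entry_le.
Qed.

End L1Norm.

Section LineFixpoint.
Variables (R : realType) (n : nat) (g : R -> 'cV[R]_n) (u : 'cV[R]_n) (P : 'M[R]_n).
Hypothesis g_fix : \forall t \near 0, g t = u - t *: (P *m g t).

Let c := n%:R * mxnorm1 P.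

Lemma line_fixpoint_dist :
  \forall t \near 0, cvnorm1 (g t - u) <= `|t| * (2 * c * cvnorm1 u).
Proof.
have c0 : 0 <= c by rewrite mulr_ge0 ?mxnorm1_ge0.
have small : 0 < 1 / (2 * c + 2) by rewrite divr_gt0 //; lra.
near=> t.
have gt : g t = u - t *: (P *m g t) by exact: (near g_fix t).
have tc : `|t| * c <= 1 / 2.
  have : `|t| <= 1 / (2 * c + 2) by exact: (near (nbhs0_le small) t).
  by rewrite ler_pdivlMr; [have := normr_ge0 t; nra | lra].
have Pg : cvnorm1 (P *m g t) <= c * cvnorm1 (g t) by exact: cvnorm1_mulmx_le.
have gu : g t - u = - (t *: (P *m g t)) by rewrite {1}gt addrAC subrr add0r.
have gle : cvnorm1 (g t) <= cvnorm1 u + `|t| * cvnorm1 (P *m g t).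
  by rewrite {1}gt -cvnorm1Z -(cvnorm1N (_ *: _)) cvnorm1D.
have tPg : `|t| * cvnorm1 (P *m g t) <= `|t| * c * cvnorm1 (g t).
  by rewrite -mulrA ler_wpM2l.
have g2 : cvnorm1 (g t) <= 2 * cvnorm1 u.
  by have := cvnorm1_ge0 (g t); have := normr_ge0 t; nra.
rewrite gu cvnorm1N cvnorm1Z; apply: le_trans tPg _.
by have := mulr_ge0 (normr_ge0 t) c0; nra.
Unshelve. all: by end_near.
Qed.

Lemma is_derive_line_fixpoint (L : 'M[R]_n) i :
  is_derive (0 : R) (1 : R) (fun t => (L *m g t) i 0) (- (L *m P *m u) i 0).
Proof.
have g0 : g 0 = u by rewrite (nbhs_singleton g_fix) scale0r subr0.
set C := 2 * c * cvnorm1 u; set l := - _.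
have C0 : 0 <= C by rewrite !mulr_ge0 ?cvnorm1_ge0 ?mxnorm1_ge0.
have LP0 := mxnorm1_ge0 (L *m P).
have cv : (fun t : R => t^-1 *: ((L *m g (t *: 1 + 0)) i 0 - (L *m g 0) i 0)) @ 0^' --> l.
  apply/cvgrPdist_le => e e0.
  have small : 0 < e / (mxnorm1 (L *m P) * C + 1) by rewrite divr_gt0 //; nra.
  near=> t.
  have tn0 : t != 0 by exact: (near (nbhs_dnbhs_neq 0) t).
  have gt : g t = u - t *: (P *m g t) by exact: (near (nbhs_dnbhs g_fix) t).
  have dist : cvnorm1 (g t - u) <= `|t| * C.
    by exact: (near (nbhs_dnbhs line_fixpoint_dist) t).
  have te : `|t| <= e / (mxnorm1 (L *m P) * C + 1).
    by exact: (near (nbhs_dnbhs (nbhs0_le small)) t).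
  have -> : t^-1 *: ((L *m g (t *: 1 + 0)) i 0 - (L *m g 0) i 0) = - (L *m P *m g t) i 0.
    rewrite addr0 [t *: 1]mulr1 g0 {1}gt mulmxBr -scalemxAr mulmxA mxE addrAC subrr.
    by rewrite add0r !mxE /GRing.scale /= mulrN mulKf.
  have -> : l - - (L *m P *m g t) i 0 = (L *m P *m (g t - u)) i 0.
    by rewrite mulmxBr /l opprK addrC !mxE.
  apply: le_trans (mulmx_entry_le _ _ _) _.
  rewrite ler_pdivlMr in te; last by nra.
  have := normr_ge0 t; nra.
apply: DeriveDef; first by apply/cvg_ex; exists l.
exact: cvg_lim cv.
Unshelve. all: by end_near.
Qed.

End LineFixpoint.

Section EuclideanBall.
Variables (R : realType) (n : nat).
Implicit Types (c x v : 'cV[R]_n) (M : 'M[R]_n).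

Lemma eball_line c r x v : eball c r x -> \forall t \near 0, eball c r (x + t *: v).
Proof.
rewrite /eball /=; set a := \sum_i _ => xr.
pose b := \sum_(i < n) (x i 0 - c i 0) * v i 0.
pose q := \sum_(i < n) v i 0 ^+ 2.
have expand t : \sum_i ((x + t *: v) i 0 - c i 0) ^+ 2 = a + t * (2 * b) + t ^+ 2 * q.
  rewrite /a /b /q !mulr_sumr -!big_split /=.
  by apply: eq_bigr => i _; rewrite !mxE; ring.
have q0 : 0 <= q by apply: sumr_ge0 => i _; exact: sqr_ge0.
have b0 := normr_ge0 b.
have small : 0 < (r ^+ 2 - a) / (2 * `|b| + q + 1) by rewrite divr_gt0 // ?subr_gt0; lra.
near=> t; rewrite expand.
have t1 : `|t| <= 1 by exact: (near (nbhs0_le ltr01) t).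
have ts : `|t| < (r ^+ 2 - a) / (2 * `|b| + q + 1) by exact: (near (nbhs0_lt small) t).
rewrite ltr_pdivlMr in ts; last lra.
have tb : t * (2 * b) <= `|t| * (2 * `|b|).
  by apply: le_trans (ler_norm _) _; rewrite !normrM normr_nat.
have tq : t ^+ 2 * q <= `|t| * q.
  by rewrite ler_wpM2r // -real_normK ?num_real // expr2 ler_piMr.
have := normr_ge0 t; nra.
Unshelve. all: by end_near.
Qed.

Lemma eball_coord c r x i : 0 < r -> eball c r x -> `|x i 0 - c i 0| < r.
Proof.
move=> r0 xr.
have : `|x i 0 - c i 0| ^+ 2 < r ^+ 2.
  rewrite real_normK ?num_real //; apply: le_lt_trans xr; rewrite (bigD1 i) //= lerDl.
  by apply: sumr_ge0 => j _; exact: sqr_ge0.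
by have := normr_ge0 (x i 0 - c i 0); nra.
Qed.

Lemma eball_mulmx M c r : 0 < r ->
  exists2 r', 0 < r' & forall x, eball c r' x -> eball (M *m c) r (M *m x).
Proof.
move=> r0; set m := mxnorm1 M; set k := (n%:R + 1) * (m + 1).
have m0 : 0 <= m by exact: mxnorm1_ge0.
have n0 : (0 : R) <= n%:R by [].
have nk : n%:R * m ^+ 2 < k ^+ 2 by rewrite /k; nra.
have r'0 : 0 < r / k by rewrite divr_gt0 // mulr_gt0 //; lra.
exists (r / k) => // x xr'; rewrite /eball /=.
have entry i : `|(M *m x) i 0 - (M *m c) i 0| <= m * (r / k).
  have -> : (M *m x) i 0 - (M *m c) i 0 = \sum_j M i j * (x j 0 - c j 0).
    by rewrite !mxE -sumrB; apply: eq_bigr => j _; rewrite mulrBr.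
  apply: le_trans (ler_norm_sum _ _ _) _.
  apply: (@le_trans _ _ (\sum_j `|M i j| * (r / k))).
    by apply: ler_sum => j _; rewrite normrM ler_wpM2l // ltW // eball_coord.
  by rewrite -mulr_suml; apply: ler_wpM2r; [exact: ltW | exact: mxnorm1_row].
apply: (@le_lt_trans _ _ (\sum_(i < n) (m * (r / k)) ^+ 2)).
  apply: ler_sum => i _; have := entry i.
  rewrite -(real_normK (num_real (_ - _))).
  by have := normr_ge0 ((M *m x) i 0 - (M *m c) i 0); nra.
rewrite sumr_const card_ord -mulr_natl.
have k0 : k != 0 by rewrite gt_eqF // mulr_gt0 //; lra.
have scaled s : 0 < s -> n%:R * (m * s) ^+ 2 < (s * k) ^+ 2.
  by move=> s0; have := exprn_gt0 2 s0; nra.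
by rewrite -[in ltRHS](divfK k0 r); exact: scaled.
Qed.

End EuclideanBall.

Section InverseForm.
Variables (R : realType) (n : nat) (A : algebra R n) (L : 'M[R]_n).

Definition dinv_mx (s : 'cV[R]_n) : 'M[R]_n :=
  L *m rmul_mx A (ainv A s) *m lmul_mx A (ainv A s).

Lemma dinv_mxE s x : dinv_mx s *m x = L *m amul A (amul A (ainv A s) x) (ainv A s).
Proof. by rewrite -!mulmxA lmul_mxE rmul_mxE. Qed.

Lemma is_derive_inv_line s v i : (\forall t \near 0, is_unit A (s + t *: v)) ->
  is_derive (0 : R) (1 : R) (fun t => (L *m ainv A (s + t *: v)) i 0)
    (- (dinv_mx s *m v) i 0).
Proof.
move=> units; have s_unit : is_unit A s.
  by have := nbhs_singleton units; rewrite scale0r addr0.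
have fix_line : \forall t \near 0, ainv A (s + t *: v) =
    ainv A s - t *: (rmul_mx A (ainv A s) *m rmul_mx A v *m ainv A (s + t *: v)).
  by apply: filterS units => t; exact: ainv_line.
have := is_derive_line_fixpoint fix_line L i.
by rewrite dinv_mxE -!mulmxA !rmul_mxE.
Qed.

Lemma pderiv_inv_form s i j :
  (\forall t \near 0, is_unit A (s + t *: delta_mx j 0)) ->
  pderivable (fun x => (L *m ainv A x) i 0) j s /\
  pderiv (fun x => (L *m ainv A x) i 0) j s = - dinv_mx s i j.
Proof.
move=> /(is_derive_inv_line i) D; split; first exact: (@ex_derive _ _ _ _ _ _ _ D).
by rewrite /pderiv derive1E (@derive_val _ _ _ _ _ _ _ D) -colE mxE.
Qed.

Lemma closed_inv_formP c r : (forall x, eball c r x -> is_unit A x) ->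
  closed_form_on (fun i s => (L *m ainv A s) i 0) (eball c r) <->
  (forall s, eball c r s -> (dinv_mx s)^T = dinv_mx s).
Proof.
move=> units.
have D s i j : eball c r s ->
    pderivable (fun x => (L *m ainv A x) i 0) j s /\
    pderiv (fun x => (L *m ainv A x) i 0) j s = - dinv_mx s i j.
  move=> sr; apply: pderiv_inv_form.
  by apply: filterS (eball_line (delta_mx j 0) sr) => t; exact: units.
split=> [closed s sr | sym s sr i j].
  apply/matrixP => i j; have [_ [_]] := closed s sr j i.
  by rewrite (D s j i sr).2 (D s i j sr).2 => /oppr_inj <-; rewrite mxE.
split; first exact: (D s i j sr).1.
split; first exact: (D s j i sr).1.
by rewrite (D s i j sr).2 (D s j i sr).2 -[in RHS](sym s sr) [in RHS]mxE.
Qed.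

End InverseForm.

Section Isomorphism.
Variables (R : realType) (n : nat).

Lemma alg_iso_inv (A1 A2 : algebra R n) K :
  alg_iso A1 A2 K -> alg_iso A2 A1 (invmx K).
Proof.
move=> [Ku [Kmul K1]]; split; first by rewrite unitmx_inv.
split; last by rewrite -K1 mulKmx.
by move=> x y; apply: (can_inj (mulKmx Ku)); rewrite mulKVmx // Kmul !mulKVmx //.
Qed.

Lemma alg_iso_ainv (A1 A2 : algebra R n) K s :
  alg_iso A1 A2 K -> is_unit A1 s ->
  is_unit A2 (K *m s) /\ ainv A2 (K *m s) = K *m ainv A1 s.
Proof.
move=> [_ [Kmul K1]] /ainvP[su us].
have Ksu : amul A2 (K *m s) (K *m ainv A1 s) = aone A2 by rewrite -Kmul su K1.
have Kus : amul A2 (K *m ainv A1 s) (K *m s) = aone A2 by rewrite -Kmul us K1.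
by split; [exists (K *m ainv A1 s) | exact: ainv_eq].
Qed.

Lemma alg_iso_unit (A1 A2 : algebra R n) K s :
  alg_iso A1 A2 K -> is_unit A2 (K *m s) -> is_unit A1 s.
Proof.
move=> iso /(alg_iso_ainv (alg_iso_inv iso))[+ _].
by have [Ku _] := iso; rewrite mulKmx.
Qed.

Lemma dinv_mx_iso (A1 A2 : algebra R n) K (L : 'M[R]_n) s :
  alg_iso A1 A2 K -> is_unit A1 s ->
  dinv_mx A1 (K^T *m L *m K) s = K^T *m dinv_mx A2 L (K *m s) *m K.
Proof.
move=> iso s_unit; have [_ [Kmul _]] := iso.
apply: mulmx_cV_inj => x.
rewrite -[RHS]mulmxA -[RHS]mulmxA !dinv_mxE (alg_iso_ainv iso s_unit).2.
by rewrite -!Kmul !mulmxA.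
Qed.

Lemma uncurling_metric_pullback (A1 A2 : algebra R n) K (L : 'M[R]_n) :
  alg_iso A1 A2 K -> uncurling_metric A2 L -> uncurling_metric A1 (K^T *m L *m K).
Proof.
move=> iso [L_sym [r [r0 [units2 closed2]]]]; have [_ [_ K1]] := iso.
split; first by rewrite !trmx_mul trmxK L_sym mulmxA.
have [r1 r10 ball1] := eball_mulmx K (aone A1) r0; rewrite K1 in ball1.
have units1 x : eball (aone A1) r1 x -> is_unit A1 x.
  by move=> /ball1/units2; exact: alg_iso_unit iso.
exists r1; split => //; split => //.
apply/(closed_inv_formP _ units1) => x x_ball.
have sym2 := (closed_inv_formP L units2).1 closed2 _ (ball1 _ x_ball).
rewrite (dinv_mx_iso _ iso (units1 _ x_ball)).
by rewrite trmx_mul [(K^T *m _)^T]trmx_mul trmxK sym2 mulmxA.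
Qed.

End Isomorphism.

Theorem theorem2p2 (R : realType) (n : nat) (hn : (0 < n)%N)
    (A1 A2 : algebra R n) (K : 'M[R]_n) :
  alg_iso A1 A2 K ->
  forall L1 : 'M[R]_n,
    uncurling_metric A1 L1 <->
    exists L2 : 'M[R]_n, uncurling_metric A2 L2 /\ L1 = K^T *m L2 *m K.
Proof.
move=> iso L1; have [Ku _] := iso.
split=> [L1_unc | [L2 [L2_unc ->]]]; first last.
  exact: uncurling_metric_pullback iso L2_unc.
exists ((invmx K)^T *m L1 *m invmx K); split.
  exact: uncurling_metric_pullback (alg_iso_inv iso) L1_unc.
by rewrite !mulmxA -trmx_mul mulVmx // trmx1 mul1mx -mulmxA mulVmx // mulmx1.
Qed.
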